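(* Let $h\ge1$, $P(u)=u^{-h}+\dots+u^{-1}+u+\dots+u^h$, and let $U(z)$ be the root of $1-z^hP(U)=0$ whose expansion at $0$ begins $U(z)=z+\cdots$. Then $U(z)$ is a power series in $z$ (not a genuine Puiseux series); for every integer $m\ge1$, $$U^m(z)=\sum_{n\ge1}\frac mn\binom{n/h}{n-m}^{*}_{2h}z^n;$$ and, with $\omega=e^{2\pi\mathrm{i}/h}$, the small roots $u_i(z)$ and large roots $v_i(z)$ of $1-zP(u)=0$ are $u_i(z)=U(\omega^{i-1}z^{1/h})$ and $v_i(z)=1/U(\omega^{i-1}z^{1/h})$ for $i=1,\dots,h$.
   Context: Small roots of $1-zP(u)=0$ are the roots (Puiseux series in $z$) tending to $0$ as $z\to0$; large roots are those with $|v(z)|\to\infty$ as $z\to0$. For real $\alpha$ and integer $k$, $\binom{\alpha}{k}^{*}_{2h}:=[u^k](1+u+\dots+u^{h-1}+u^{h+1}+\dots+u^{2h})^{\alpha}$, the power being the formal power series with constant term $1$ (value $0$ for $k<0$). *)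

From mathcomp Require Import all_boot all_order all_algebra algC.
Set Implicit Arguments. Unset Strict Implicit. Unset Printing Implicit Defensive.
Import Order.TTheory GRing.Theory Num.Theory.
Local Open Scope ring_scope.

(* Formal power series in one variable s over algC: coefficient sequences. *)
Definition fps := nat -> algC.

Definition fps_zero : fps := fun _ => 0.
Definition fps_add (f g : fps) : fps := fun n => f n + g n.
Definition fps_mul (f g : fps) : fps :=
  fun n => \sum_(i < n.+1) f i * g (n - i)%N.
Definition fps_Xn (k : nat) : fps := fun n => (n == k)%:R.
Definition fps_pow (f : fps) (m : nat) : fps := iter m (fps_mul f) (fps_Xn 0).
Definition fps_sum (s : seq fps) : fps := foldr fps_add fps_zero s.

(* fps_subst c d f = f(c * s^d) (d >= 1) *)
Definition fps_subst (c : algC) (d : nat) (f : fps) : fps :=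
  fun n => if (d %| n)%N then c ^+ (n %/ d) * f (n %/ d)%N else 0.

(* Exponents of Phi_h(u) = 1 + u + ... + u^(h-1) + u^(h+1) + ... + u^(2h)
   = u^h P(u). *)
Definition Phi_idx (h : nat) : seq nat := [seq j <- iota 0 (2 * h).+1 | j != h].

Definition Phi (h : nat) : fps := fun n => ((n <= 2 * h)%N && (n != h))%:R.

Definition gbinom (alpha : algC) (j : nat) : algC :=
  (\prod_(i < j) (alpha - i%:R)) / (j`!)%:R.

(* [u^k] Phi(u)^alpha, where Phi^alpha := sum_j binom(alpha,j) (Phi-1)^j
   (the formal power series with constant term 1). *)
Definition binom_star (h : nat) (alpha : algC) (k : int) : algC :=
  match k with
  | Posz k => \sum_(j < k.+1)
       gbinom alpha j * fps_pow (fps_add (Phi h) (fun n => - fps_Xn 0 n)) j k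
  | Negz _ => 0
  end.

(* The Laurent series u = s^(-k) * g is a root of  u^h - s^N * Phi_h(u) = 0,
   i.e. (since u <> 0 and u^h P(u) = Phi_h(u)) of  1 - s^N P(u) = 0.
   The equation is multiplied by s^(2hk) to clear denominators. *)
Definition laurent_root (h N k : nat) (g : fps) : Prop :=
  fps_mul (fps_Xn (h * k)) (fps_pow g h) =
  fps_mul (fps_Xn N)
    (fps_sum [seq fps_mul (fps_Xn ((2 * h - j) * k)) (fps_pow g j) | j <- Phi_idx h]).

(* s^(-k) g tends to 0 (positive valuation) *)
Definition laurent_small (k : nat) (g : fps) : Prop := forall n, (n <= k)%N -> g n = 0.
(* s^(-k) g tends to infinity (negative valuation) *)
Definition laurent_large (k : nat) (g : fps) : Prop := exists2 n, (n < k)%N & g n != 0.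

(* With [Phi_h(u) = u^h P(u)], the equation [1 = z^h P(u)] reads
   [z = u / Phi_h(u)^(1/h)], where [Phi_h^(1/h)] is the binomial series
   composed with [Phi_h - 1]. Hence [U] is the compositional inverse of
   [u / Phi_h(u)^(1/h)], and Lagrange inversion, realised by the residue
   [A |-> [u^n] A(u) Phi_h(u)^((n+1)/h) (u / Phi_h(u)^(1/h))'], gives
   [[z^n] U^m = (m/n) [u^(n-m)] Phi_h(u)^(n/h)].
   A root of [u^h = z Phi_h(u)] without constant term is determined by its
   leading coefficient, an [h]-th root of unity: this identifies the small
   roots with the [U(w^i z^(1/h))]. Since [P(1/u) = P(u)], the large roots are
   their reciprocals. *)

From HB Require Import structures.
From mathcomp Require Import all_boot all_order all_algebra algC.
From mathcomp Require Import boolp ring zify.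
Import Order.TTheory GRing.Theory Num.Theory.
Local Open Scope ring_scope.
Set Implicit Arguments. Unset Strict Implicit. Unset Printing Implicit Defensive.

(** * The integral domain of formal power series *)

HB.instance Definition _ := Choice.copy fps (nat -> algC).

Definition fps_opp (f : fps) : fps := fun n => - f n.

Lemma fps_addA : associative fps_add.
Proof. by move=> f g k; apply: funext => n; rewrite /fps_add addrA. Qed.

Lemma fps_addC : commutative fps_add.
Proof. by move=> f g; apply: funext => n; rewrite /fps_add addrC. Qed.

Lemma fps_add0 : left_id fps_zero fps_add.
Proof. by move=> f; apply: funext => n; rewrite /fps_add add0r. Qed.

Lemma fps_addN : left_inverse fps_zero fps_opp fps_add.
Proof. by move=> f; apply: funext => n; rewrite /fps_add addNr. Qed.

HB.instance Definition _ :=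
  GRing.isZmodule.Build fps fps_addA fps_addC fps_add0 fps_addN.

(* The coefficients of [f * g] up to degree [n] are those of the product of
   the truncations of [f] and [g] at degree [n]: this transfers the ring laws
   from polynomials. *)
Definition fps_trunc (n : nat) (f : fps) : {poly algC} := \poly_(i < n.+1) f i.

Lemma coef_fps_trunc n f i : (fps_trunc n f)`_i = if (i <= n)%N then f i else 0.
Proof. exact: coef_poly. Qed.

Lemma coefM_eq_upto (R : nzRingType) (p p' q q' : {poly R}) n :
  (forall i, (i <= n)%N -> p`_i = p'`_i) -> (forall i, (i <= n)%N -> q`_i = q'`_i) ->
  (p * q)`_n = (p' * q')`_n.
Proof.
move=> Ep Eq; rewrite !coefM; apply: eq_bigr => -[i /= lt_i_n] _.
by rewrite Ep // Eq // leq_subr.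
Qed.

Lemma fps_mul_trunc (f g : fps) n :
  fps_mul f g n = (fps_trunc n f * fps_trunc n g)`_n.
Proof.
rewrite coefM; apply: eq_bigr => -[i /= lt_i_n] _.
by rewrite !coef_fps_trunc -ltnS lt_i_n leq_subr.
Qed.

Lemma fps_trunc_mul (f g : fps) n i : (i <= n)%N ->
  (fps_trunc n (fps_mul f g))`_i = (fps_trunc n f * fps_trunc n g)`_i.
Proof.
move=> le_i_n; rewrite coef_fps_trunc le_i_n fps_mul_trunc.
by apply: coefM_eq_upto => j le_j_i; rewrite !coef_fps_trunc le_j_i (leq_trans le_j_i).
Qed.

Lemma fps_mulA : associative fps_mul.
Proof.
move=> f g k; apply: funext => n; rewrite fps_mul_trunc [RHS]fps_mul_trunc.
rewrite (@coefM_eq_upto _ _ (fps_trunc n f) _ (fps_trunc n g * fps_trunc n k) n) //;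
  last by move=> i; apply: fps_trunc_mul.
rewrite [RHS](@coefM_eq_upto _ _ (fps_trunc n f * fps_trunc n g) _ (fps_trunc n k) n) //;
  last by move=> i; apply: fps_trunc_mul.
by rewrite mulrA.
Qed.

Lemma fps_mulC : commutative fps_mul.
Proof. by move=> f g; apply: funext => n; rewrite !fps_mul_trunc mulrC. Qed.

Lemma fps_mul1 : left_id (fps_Xn 0) fps_mul.
Proof.
move=> f; apply: funext => n; rewrite fps_mul_trunc (@coefM_eq_upto _ _ 1 _ (fps_trunc n f)) //.
  by rewrite mul1r coef_fps_trunc leqnn.
by move=> i le_i_n; rewrite coef_fps_trunc le_i_n coef1.
Qed.

Lemma fps_mulDl : left_distributive fps_mul fps_add.
Proof.
move=> f g k; apply: funext => n; rewrite /fps_add !fps_mul_trunc.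
rewrite (@coefM_eq_upto _ _ (fps_trunc n f + fps_trunc n g) _ (fps_trunc n k)) //.
  by rewrite mulrDl coefD.
by move=> i le_i_n; rewrite coefD !coef_fps_trunc le_i_n.
Qed.

Lemma fps_one_neq0 : fps_Xn 0 != fps_zero.
Proof. by apply/eqP => /(congr1 (fun f : fps => f 0%N))/eqP; rewrite oner_eq0. Qed.

HB.instance Definition _ := GRing.Zmodule_isComNzRing.Build fps
  fps_mulA fps_mulC fps_mul1 fps_mulDl fps_one_neq0.

Lemma fps_mulE (f g : fps) : fps_mul f g = f * g. Proof. by []. Qed.

Lemma fps_coefD (f g : fps) n : (f + g) n = f n + g n. Proof. by []. Qed.
Lemma fps_coefB (f g : fps) n : (f - g) n = f n - g n. Proof. by []. Qed.
Lemma fps_coef0 n : (0 : fps) n = 0. Proof. by []. Qed.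
Lemma fps_coef1 n : (1 : fps) n = (n == 0%N)%:R. Proof. by []. Qed.

Lemma fps_coefM (f g : fps) n : (f * g) n = \sum_(i < n.+1) f i * g (n - i)%N.
Proof. by []. Qed.

Lemma fps_coefM_trunc (f g : fps) n : (f * g) n = (fps_trunc n f * fps_trunc n g)`_n.
Proof. exact: fps_mul_trunc. Qed.

Lemma fps_coefM_upto (f f' g g' : fps) n :
  (forall i, (i <= n)%N -> f i = f' i) -> (forall i, (i <= n)%N -> g i = g' i) ->
  (f * g) n = (f' * g') n.
Proof.
move=> Ef Eg; rewrite !fps_coefM; apply: eq_bigr => -[i /= lt_i_n] _.
by rewrite Ef // Eg // leq_subr.
Qed.

Lemma fps_coef_sum I (r : seq I) (P : pred I) (F : I -> fps) n :
  (\sum_(i <- r | P i) F i) n = \sum_(i <- r | P i) F i n.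
Proof. exact: (big_morph (fun f : fps => f n)). Qed.

Lemma fps_coefMn (f : fps) k n : (f *+ k) n = f n *+ k.
Proof. by elim: k => [|k IHk]; rewrite ?mulr0n // !mulrS fps_coefD IHk. Qed.

Lemma fps_powE (f : fps) m : fps_pow f m = f ^+ m.
Proof. by elim: m => [|m IHm] //=; rewrite exprS -IHm. Qed.

Lemma fps_sumE (s : seq fps) : fps_sum s = \sum_(f <- s) f.
Proof. by elim: s => [|f s IHs]; rewrite ?big_nil ?big_cons //= -IHs. Qed.

Definition fpsC (c : algC) : fps := fun n => if n == 0%N then c else 0.

Lemma coef_fpsCM c (f : fps) n : (fpsC c * f) n = c * f n.
Proof.
rewrite fps_coefM big_ord_recl big1 ?addr0 ?subn0 // => i _.
by rewrite /fpsC /bump /= mul0r.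
Qed.

Lemma fpsC_is_zmod_morphism : zmod_morphism fpsC.
Proof. by move=> a b; apply: funext => -[|n]; rewrite /fpsC fps_coefB ?subr0. Qed.

Lemma fpsC_is_monoid_morphism : monoid_morphism fpsC.
Proof.
split=> [|a b]; first by apply: funext => -[|n].
by apply: funext => n; rewrite coef_fpsCM /fpsC; case: eqP; rewrite ?mulr0.
Qed.

HB.instance Definition _ := GRing.isZmodMorphism.Build algC fps fpsC fpsC_is_zmod_morphism.
HB.instance Definition _ := GRing.isMonoidMorphism.Build algC fps fpsC fpsC_is_monoid_morphism.

Definition fpsX : fps := fps_Xn 1.

Lemma coef_fps_XnM k (f : fps) n :
  (fps_Xn k * f) n = if (n < k)%N then 0 else f (n - k)%N.
Proof.
rewrite fps_coefM_trunc (@coefM_eq_upto _ _ 'X^k _ (fps_trunc n f)) //.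
  by rewrite coefXnM coef_fps_trunc leq_subr.
by move=> i le_i_n; rewrite coef_fps_trunc le_i_n coefXn.
Qed.

Lemma fps_XnE k : fps_Xn k = fpsX ^+ k.
Proof.
elim: k => [|k IHk]; first by rewrite expr0.
rewrite exprS -IHk; apply: funext => n; rewrite coef_fps_XnM /fps_Xn.
by case: n => [|n] //; rewrite ltnS ltn0 subn1 eqSS.
Qed.

Lemma coef_fpsXnM k (f : fps) n :
  (fpsX ^+ k * f) n = if (n < k)%N then 0 else f (n - k)%N.
Proof. by rewrite -fps_XnE coef_fps_XnM. Qed.

Lemma coef_fpsXnM_addn k (f : fps) n : (fpsX ^+ k * f) (n + k)%N = f n.
Proof. by rewrite coef_fpsXnM ltnNge leq_addl addnK. Qed.

Lemma coef_fpsXn k n : (fpsX ^+ k) n = (n == k)%:R.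
Proof. by rewrite -fps_XnE. Qed.

(** * Valuation *)

Definition vanish_below (f : fps) (r : nat) := forall n, (n < r)%N -> f n = 0.

Lemma vanish_below0 f : vanish_below f 0.
Proof. by []. Qed.

Lemma vanish_belowM (f g : fps) a b : vanish_below f a -> vanish_below g b ->
  vanish_below (f * g) (a + b) /\ (f * g) (a + b)%N = f a * g b.
Proof.
move=> f0 g0; have fg0 i j : (i < a)%N || (j < b)%N -> f i * g j = 0.
  by case/orP => [/f0|/g0] ->; rewrite ?mul0r ?mulr0.
split=> [n lt_n_ab|].
  rewrite fps_coefM big1 // => -[i /= lt_i_n] _; apply: fg0.
  by case: (ltnP i a) => //= le_a_i; lia.
rewrite fps_coefM (bigD1 (@Ordinal (a + b).+1 a (leq_addr b a))) //= addKn big1 ?addr0 //.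
move=> -[i /= lt_i_ab] /eqP ne_i_a; apply: fg0.
case: (ltngtP i a) => //= [lt_a_i|eq_i_a]; last by case: ne_i_a; apply: val_inj.
lia.
Qed.

Lemma vanish_belowX (f : fps) a m : vanish_below f a ->
  vanish_below (f ^+ m) (m * a) /\ (f ^+ m) (m * a)%N = f a ^+ m.
Proof.
move=> f0; elim: m => [|m [IH0 IHa]]; first by rewrite mul0n expr0.
have [fm0 fma] := vanish_belowM f0 IH0.
by rewrite exprS mulSn; split=> //; rewrite fma IHa exprS.
Qed.

Lemma fps_neq0_lowest (f : fps) : f != 0 -> exists r, vanish_below f r /\ f r != 0.
Proof.
move=> f_neq0; have [|r fr_neq0 r_min] := ex_minnP (P := fun n => f n != 0).
  apply/not_existsP => f_eq0; case/eqP: f_neq0; apply: funext => n.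
  by apply/eqP/negbNE/negP/f_eq0.
by exists r; split=> // n lt_n_r; apply/eqP/negbNE/negP => /r_min; rewrite leqNgt lt_n_r.
Qed.

Definition fps_shift (f : fps) (r : nat) : fps := fun n => f (n + r)%N.

Lemma fps_shiftE f r : vanish_below f r -> f = fpsX ^+ r * fps_shift f r.
Proof.
move=> f0; apply: funext => n; rewrite coef_fpsXnM.
by case: ltnP => [/f0 //|le_r_n]; rewrite /fps_shift subnK.
Qed.

(** * Composition *)

Definition horner_fps (p : {poly algC}) (q : fps) : fps := (map_poly fpsC p).[q].

Lemma horner_fpsM p1 p2 q : horner_fps (p1 * p2) q = horner_fps p1 q * horner_fps p2 q.
Proof. by rewrite /horner_fps rmorphM hornerM. Qed.

Definition fps_comp (b q : fps) : fps := fun n => horner_fps (fps_trunc n b) q n.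

Section Composition.

Variable q : fps.
Hypothesis q0 : q 0%N = 0.

Lemma coef_horner_fps p n : horner_fps p q n = \sum_(i < n.+1) p`_i * (q ^+ i) n.
Proof.
rewrite /horner_fps (@horner_coef_wide _ (n.+1 + size p)); last first.
  by rewrite (leq_trans (size_poly _ _)) // leq_addl.
rewrite fps_coef_sum big_split_ord /= [X in _ + X]big1 ?addr0.
  by apply: eq_bigr => i _; rewrite coef_map coef_fpsCM.
move=> i _; rewrite coef_map coef_fpsCM.
have q_1 : vanish_below q 1 by case.
have [qi0 _] := vanish_belowX (n.+1 + i) q_1.
by rewrite qi0 ?mulr0 // muln1 ltnS leq_addr.
Qed.

Lemma coef_fps_comp b n : fps_comp b q n = \sum_(i < n.+1) b i * (q ^+ i) n.
Proof.
rewrite /fps_comp coef_horner_fps; apply: eq_bigr => -[i /= lt_i_n] _.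
by rewrite coef_fps_trunc -ltnS lt_i_n.
Qed.

Lemma horner_fps_trunc b N n : (n <= N)%N -> horner_fps (fps_trunc N b) q n = fps_comp b q n.
Proof.
move=> le_n_N; rewrite coef_fps_comp coef_horner_fps; apply: eq_bigr => -[i /= lt_i_n] _.
by rewrite coef_fps_trunc (leq_trans _ le_n_N) // -ltnS.
Qed.

Lemma fps_compM b1 b2 : fps_comp (b1 * b2) q = fps_comp b1 q * fps_comp b2 q.
Proof.
apply: funext => n; have -> : fps_comp (b1 * b2) q n =
    horner_fps (fps_trunc n b1 * fps_trunc n b2) q n.
  by rewrite /fps_comp !coef_horner_fps; apply: eq_bigr => -[i /= ?] _; rewrite fps_trunc_mul.
by rewrite horner_fpsM; apply: fps_coefM_upto => i le_i_n; rewrite horner_fps_trunc.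
Qed.

Lemma fps_compB b1 b2 : fps_comp (b1 - b2) q = fps_comp b1 q - fps_comp b2 q.
Proof.
apply: funext => n; rewrite fps_coefB !coef_fps_comp -sumrB.
by apply: eq_bigr => i _; rewrite fps_coefB mulrBl.
Qed.

Lemma fps_compD b1 b2 : fps_comp (b1 + b2) q = fps_comp b1 q + fps_comp b2 q.
Proof.
apply: funext => n; rewrite fps_coefD !coef_fps_comp -big_split.
by apply: eq_bigr => i _; rewrite fps_coefD mulrDl.
Qed.

Lemma fps_compC c : fps_comp (fpsC c) q = fpsC c.
Proof.
apply: funext => n; rewrite coef_fps_comp big_ord_recl big1 ?addr0.
  by rewrite /fpsC /= expr0 fps_coef1 mulr_natr; case: (n == 0%N).
by move=> i _; rewrite /fpsC /= mul0r.
Qed.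

Lemma fps_comp1 : fps_comp 1 q = 1.
Proof. by rewrite -(rmorph1 fpsC) fps_compC. Qed.

Lemma fps_compX : fps_comp fpsX q = q.
Proof.
apply: funext => -[|n]; rewrite coef_fps_comp; first by rewrite big_ord1 mul0r q0.
rewrite 2!big_ord_recl big1 /fpsX /fps_Xn /= ?mul0r ?mul1r ?add0r ?addr0 ?expr1 //.
by move=> i _; rewrite mul0r.
Qed.

Lemma fps_compXn b m : fps_comp (b ^+ m) q = fps_comp b q ^+ m.
Proof.
by elim: m => [|m IHm]; rewrite ?fps_comp1 // !exprS fps_compM IHm.
Qed.

Lemma fps_comp_sum I (r : seq I) (F : I -> fps) :
  fps_comp (\sum_(i <- r) F i) q = \sum_(i <- r) fps_comp (F i) q.
Proof.
elim: r => [|i r IHr]; first by rewrite !big_nil -(rmorph0 fpsC) fps_compC.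
by rewrite !big_cons fps_compD IHr.
Qed.

Lemma coef_fps_comp_lowest b r : vanish_below b r -> fps_comp b q r = b r * q 1%N ^+ r.
Proof.
move=> b0; have q_1 : vanish_below q 1 by case.
rewrite coef_fps_comp big_ord_recr /= big1 ?add0r => [|i _]; last by rewrite b0 ?mul0r.
by have [_] := vanish_belowX r q_1; rewrite muln1 => ->.
Qed.

Lemma fps_comp_inj : q 1%N != 0 -> injective (fps_comp ^~ q).
Proof.
move=> q1 b1 b2 /= eq_b12; apply/eqP; rewrite -subr_eq0.
apply: contraT => /fps_neq0_lowest [r [b0 br]].
have := coef_fps_comp_lowest b0; rewrite fps_compB eq_b12 subrr fps_coef0 => /esym/eqP.
by rewrite mulf_eq0 (negbTE br) expf_eq0 (negbTE q1) andbF.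
Qed.

End Composition.

(** * Units and integrality *)

Definition fps_geom : fps := fun _ => 1.

Lemma fps_geomM : fps_geom * (1 - fpsX) = 1.
Proof.
apply: funext => n; rewrite mulrBr mulr1 fps_coefB mulrC -(expr1 fpsX) coef_fpsXnM.
by case: n => [|n]; rewrite fps_coef1 /fps_geom ?subr0 // ltnS ltn0 subrr.
Qed.

(* [1 / f = c / (1 - (1 - c f))] with [c = 1 / f 0], a geometric series in a
   series without constant term. *)
Definition fps_inv (f : fps) : fps :=
  if f 0%N == 0 then f else fpsC (f 0%N)^-1 * fps_comp fps_geom (1 - fpsC (f 0%N)^-1 * f).

Definition fps_unit : pred fps := fun f => f 0%N != 0.

Lemma fps_mulVr : {in fps_unit, left_inverse 1 fps_inv *%R}.
Proof.
move=> f f0; rewrite /fps_inv (negbTE f0); set c := (f 0%N)^-1; set q := 1 - fpsC c * f.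
have q0 : q 0%N = 0 by rewrite /q fps_coefB coef_fpsCM mulVf ?subrr.
have := congr1 (fps_comp ^~ q) fps_geomM.
rewrite /= fps_compM // fps_compB // fps_comp1 // fps_compX // => <-.
by rewrite /q; ring.
Qed.

Lemma fps_unitPl (f g : fps) : g * f = 1 -> fps_unit f.
Proof.
move=> /(congr1 (fun k : fps => k 0%N)); rewrite fps_coefM big_ord1 /fps_unit.
by apply: contra_eqN => /eqP ->; rewrite mulr0 eq_sym oner_eq0.
Qed.

Lemma fps_inv_out : {in [predC fps_unit], fps_inv =1 id}.
Proof. by move=> f; rewrite inE /fps_unit negbK /fps_inv => ->. Qed.

HB.instance Definition _ :=
  GRing.ComNzRing_hasMulInverse.Build fps fps_mulVr fps_unitPl fps_inv_out.

Lemma fps_unitE (f : fps) : (f \is a GRing.unit) = (f 0%N != 0).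
Proof. by []. Qed.

Lemma fps_mulf_eq0 : GRing.integral_domain_axiom fps.
Proof.
move=> f g fg0; apply/norP => -[/fps_neq0_lowest[a [f0 fa]] /fps_neq0_lowest[b [g0 gb]]].
have [_] := vanish_belowM f0 g0; rewrite fg0 fps_coef0 => /esym/eqP.
by rewrite mulf_eq0 (negbTE fa) (negbTE gb).
Qed.

HB.instance Definition _ := GRing.ComUnitRing_isIntegral.Build fps fps_mulf_eq0.

Lemma coef0_fps_inv (f : fps) : (f^-1) 0%N = (f 0%N)^-1.
Proof.
have [f0|f0] := eqVneq (f 0%N) 0; first by rewrite invr_out ?fps_unitE ?f0 ?invr0 ?eqxx.
have := congr1 (fun k : fps => k 0%N) (mulrV (f0 : f \is a GRing.unit)).
by rewrite fps_coefM big_ord1 fps_coef1 => /(canRL (mulKf f0)); rewrite mulr1.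
Qed.

Lemma fpsXn_neq0 k : fpsX ^+ k != 0.
Proof.
apply/eqP => /(congr1 (fun f : fps => f k)).
by rewrite coef_fpsXn eqxx => /eqP; rewrite oner_eq0.
Qed.

(** * Derivative and binomial series *)

Definition fps_deriv (f : fps) : fps := fun n => f n.+1 *+ n.+1.

Lemma fps_derivC c : fps_deriv (fpsC c) = 0.
Proof. by apply: funext => n; rewrite /fps_deriv /fpsC mul0rn. Qed.

Lemma fps_deriv1 : fps_deriv 1 = 0.
Proof. by rewrite -(rmorph1 fpsC) fps_derivC. Qed.

Lemma fps_derivX : fps_deriv fpsX = 1.
Proof. by apply: funext => -[|n]; rewrite /fps_deriv /fpsX /fps_Xn fps_coef1 ?mul0rn. Qed.

Lemma fps_derivD (f g : fps) : fps_deriv (f + g) = fps_deriv f + fps_deriv g.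
Proof. by apply: funext => n; rewrite /fps_deriv !fps_coefD mulrnDl. Qed.

Lemma fps_derivM (f g : fps) : fps_deriv (f * g) = fps_deriv f * g + f * fps_deriv g.
Proof.
apply: funext => n; rewrite fps_coefD /fps_deriv fps_coefM_trunc -coef_deriv derivM coefD.
by congr (_ + _); rewrite fps_coefM_trunc; apply: coefM_eq_upto => i le_i_n;
  rewrite ?coef_deriv !coef_fps_trunc ?ltnS le_i_n ?(leq_trans le_i_n).
Qed.

Lemma fps_derivXn (f : fps) m : fps_deriv (f ^+ m.+1) = f ^+ m * fps_deriv f *+ m.+1.
Proof.
elim: m => [|m IHm]; first by rewrite expr1 expr0 mul1r.
by rewrite exprS fps_derivM IHm exprS [in RHS]mulrSr; ring.
Qed.

Lemma fps_derivV (f : fps) : f \is a GRing.unit ->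
  fps_deriv f^-1 = - (fps_deriv f * f^-2).
Proof.
move=> f_unit; have := congr1 fps_deriv (mulrV f_unit).
rewrite fps_derivM fps_deriv1 => /eqP; rewrite addr_eq0 => /eqP Df.
rewrite -[fps_deriv f^-1]mul1r -(mulVr f_unit) -mulrA -[f * _]opprK -Df.
by rewrite mulrN mulrCA -expr2 exprVn.
Qed.

Lemma coef_fpsX_deriv (f : fps) n : (fpsX * fps_deriv f) n = f n *+ n.
Proof.
rewrite -(expr1 fpsX) coef_fpsXnM; case: n => [|n]; first by rewrite mulr0n.
by rewrite ltnS ltn0 subn1.
Qed.

Lemma gbinom0 a : gbinom a 0 = 1.
Proof. by rewrite /gbinom big_ord0 fact0 divr1. Qed.

Lemma gbinomS a j : gbinom a j.+1 *+ j.+1 = (a - j%:R) * gbinom a j.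
Proof.
rewrite /gbinom big_ord_recr /= factS natrM -mulr_natr.
have j1_neq0 : (j.+1%:R : algC) != 0 by rewrite pnatr_eq0.
have fact_neq0 : ((j`!)%:R : algC) != 0 by rewrite pnatr_eq0 -lt0n fact_gt0.
by field; rewrite fact_neq0 addrC natr1 j1_neq0.
Qed.

Definition binom_series (a : algC) : fps := gbinom a.

(* [(1 + s)^a] is characterised by [(1 + s) f' = a f] and [f 0 = 1]. *)
Definition binom_ode (f : fps) (a : algC) := (1 + fpsX) * fps_deriv f = fpsC a * f.

Lemma coef_binom_ode (f : fps) n : ((1 + fpsX) * fps_deriv f) n = f n.+1 *+ n.+1 + f n *+ n.
Proof. by rewrite mulrDl mul1r fps_coefD coef_fpsX_deriv. Qed.

Lemma binom_series_ode a : binom_ode (binom_series a) a.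
Proof.
by apply: funext => n; rewrite coef_binom_ode coef_fpsCM /binom_series gbinomS -mulr_natr; ring.
Qed.

Lemma binom_odeM f g a b : binom_ode f a -> binom_ode g b -> binom_ode (f * g) (a + b).
Proof.
rewrite /binom_ode fps_derivM rmorphD => Df Dg.
rewrite mulrDr mulrA Df mulrCA Dg; ring.
Qed.

Lemma binom_ode_uniq f g a : binom_ode f a -> binom_ode g a -> f 0%N = g 0%N -> f = g.
Proof.
move=> Df Dg fg0; apply: funext; elim=> [//|n IHn].
move: (congr1 (fun k : fps => k n) Df) (congr1 (fun k : fps => k n) Dg).
rewrite /= !coef_binom_ode !coef_fpsCM IHn => Ef Eg.
have : f n.+1 *+ n.+1 = g n.+1 *+ n.+1 by apply: (addIr (g n *+ n)); rewrite Ef Eg.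
by rewrite -[LHS]mulr_natr -[RHS]mulr_natr => /mulIf; apply; rewrite pnatr_eq0.
Qed.

Lemma binom_seriesD a b : binom_series a * binom_series b = binom_series (a + b).
Proof.
apply: binom_ode_uniq (binom_odeM (binom_series_ode a) (binom_series_ode b)) _ _.
  exact: binom_series_ode.
by rewrite fps_coefM big_ord1 /binom_series !gbinom0 mulr1.
Qed.

Lemma binom_series0 : binom_series 0 = 1.
Proof.
apply: binom_ode_uniq (binom_series_ode 0) _ (gbinom0 0).
by rewrite /binom_ode fps_deriv1 mulr0 rmorph0 mul0r.
Qed.

Lemma binom_seriesMn a m : binom_series a ^+ m = binom_series (m%:R * a).
Proof.
elim: m => [|m IHm]; first by rewrite expr0 mul0r binom_series0.
by rewrite exprS IHm binom_seriesD mulrSr mulrDl mul1r addrC.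
Qed.

Lemma binom_series1 : binom_series 1 = 1 + fpsX.
Proof.
apply: binom_ode_uniq (binom_series_ode 1) _ _.
  by rewrite /binom_ode fps_derivD fps_deriv1 fps_derivX add0r mulr1 rmorph1 mul1r.
by rewrite /binom_series gbinom0 fps_coefD /fpsX /fps_Xn /= addr0.
Qed.

(** * Lagrange inversion of [z = u / Phi_h(u)^(1/h)] *)

Definition Phi_at (h : nat) (y : fps) : fps := \sum_(j <- Phi_idx h) y ^+ j.

(* Multiplied by [y^h], this is [1 - z P(y) = 0] with [z = s^(h d)]. *)
Definition root_eqn (h d : nat) (y : fps) := y ^+ h = fpsX ^+ (h * d) * Phi_at h y.

Lemma mem_Phi_idx h n : (n \in Phi_idx h) = (n <= 2 * h)%N && (n != h).
Proof. by rewrite mem_filter mem_iota add0n ltnS andbC. Qed.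

Lemma Phi_idx_uniq h : uniq (Phi_idx h).
Proof. by rewrite filter_uniq // iota_uniq. Qed.

Lemma sum_Phi_idx_eq h n : \sum_(j <- Phi_idx h) ((n == j)%:R : algC) = Phi h n.
Proof.
rewrite -natr_sum (eq_bigr (fun j => if j == n then 1 else 0)%N) => [|j _]; last first.
  by rewrite eq_sym; case: eqP.
by rewrite -big_mkcond sum1_count count_uniq_mem ?Phi_idx_uniq // mem_Phi_idx.
Qed.

Lemma Phi_sum h : Phi h = Phi_at h fpsX.
Proof.
apply: funext => n; rewrite /Phi_at fps_coef_sum -sum_Phi_idx_eq.
by apply: eq_bigr => j _; rewrite coef_fpsXn.
Qed.

Lemma coef0_Phi_at h y : (0 < h)%N -> y 0%N = 0 -> Phi_at h y 0%N = 1.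
Proof.
move=> h_gt0 y0; rewrite /Phi_at fps_coef_sum (eq_bigr (fun j => (0 == j)%:R)) => [|j _].
  by rewrite sum_Phi_idx_eq /Phi leq0n eq_sym -lt0n h_gt0.
have [_] := vanish_belowX j (vanish_below0 y).
by rewrite muln0 => ->; rewrite y0 expr0n eq_sym.
Qed.

Lemma fps_comp_Phi_at h y q : q 0%N = 0 -> fps_comp (Phi_at h y) q = Phi_at h (fps_comp y q).
Proof.
by move=> q0; rewrite fps_comp_sum //; apply: eq_bigr => j _; rewrite fps_compXn.
Qed.

Section Lagrange.

Variable h : nat.
Hypothesis h_gt0 : (0 < h)%N.

Lemma coef0_Phi_sub1 : (Phi h - 1) 0%N = 0.
Proof. by rewrite fps_coefB /Phi leq0n eq_sym -lt0n h_gt0 subrr. Qed.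

Definition Phi_root : fps := fps_comp (binom_series h%:R^-1) (Phi h - 1).

Lemma Phi_rootXn n : Phi_root ^+ n = fps_comp (binom_series (n%:R / h%:R)) (Phi h - 1).
Proof. by rewrite -fps_compXn ?coef0_Phi_sub1 // binom_seriesMn. Qed.

Lemma Phi_rootXh : Phi_root ^+ h = Phi h.
Proof.
rewrite Phi_rootXn divff ?pnatr_eq0 -?lt0n // binom_series1.
by rewrite fps_compD ?fps_comp1 ?fps_compX ?coef0_Phi_sub1 // addrC subrK.
Qed.

Lemma coef0_Phi_root : Phi_root 0%N = 1.
Proof.
by rewrite /Phi_root coef_fps_comp ?coef0_Phi_sub1 // big_ord1 expr0 mulr1 /binom_series gbinom0.
Qed.

Lemma Phi_root_unit : Phi_root \is a GRing.unit.
Proof. by rewrite fps_unitE coef0_Phi_root oner_eq0. Qed.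

(* The compositional inverse of [U]: on [1 = z^h P(u)] one has
   [z = u / Phi_h(u)^(1/h)]. *)
Definition Uinv : fps := fpsX / Phi_root.

Lemma coef0_Uinv : Uinv 0%N = 0.
Proof. by rewrite /Uinv -(expr1 fpsX) coef_fpsXnM. Qed.

Lemma coef1_Uinv : Uinv 1%N = 1.
Proof. by rewrite /Uinv -(expr1 fpsX) coef_fpsXnM /= coef0_fps_inv coef0_Phi_root invr1. Qed.

(* [Uinv_coef n A] is the coefficient of [Uinv^n] in the expansion of [A]
   in powers of [Uinv], computed as the residue of [A Uinv' / Uinv^(n+1)]. *)
Definition lagrange_kernel (n : nat) : fps := Phi_root ^+ n.+1 * fps_deriv Uinv.

Definition Uinv_coef (n : nat) (A : fps) : algC := (A * lagrange_kernel n) n.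

Lemma coef0_lagrange_kernel n : lagrange_kernel n 0%N = 1.
Proof.
have [_] := vanish_belowM (vanish_below0 (Phi_root ^+ n.+1)) (vanish_below0 (fps_deriv Uinv)).
rewrite /lagrange_kernel addn0 => ->.
have [_] := vanish_belowX n.+1 (vanish_below0 Phi_root); rewrite muln0 => ->.
by rewrite coef0_Phi_root expr1n mul1r /fps_deriv coef1_Uinv.
Qed.

Lemma lagrange_kernelS n :
  lagrange_kernel n.+1 = Phi_root ^+ n.+1 - fpsX * (Phi_root ^+ n * fps_deriv Phi_root).
Proof.
have P_unit := Phi_root_unit.
have PV : Phi_root ^+ n.+2 * Phi_root^-1 = Phi_root ^+ n.+1 by rewrite exprSr mulrK.
have PV2 : Phi_root ^+ n.+2 * Phi_root^-2 = Phi_root ^+ n by rewrite -addn2 exprD mulrK ?unitrX.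
rewrite /lagrange_kernel /Uinv fps_derivM fps_derivX mul1r fps_derivV // mulrDr PV -PV2.
ring.
Qed.

Lemma coef_lagrange_kernel a p : (0 < a)%N ->
  lagrange_kernel a p = (Phi_root ^+ a) p * ((a%:R - p%:R) / a%:R).
Proof.
case: a => [//|a] _; rewrite lagrange_kernelS fps_coefB.
have a1_neq0 : (a.+1%:R : algC) != 0 by rewrite pnatr_eq0.
have XD : (fpsX * (Phi_root ^+ a * fps_deriv Phi_root)) p =
    (Phi_root ^+ a.+1) p * p%:R / a.+1%:R.
  apply: (canRL (mulfK a1_neq0)).
  by rewrite [LHS]mulr_natr -fps_coefMn -mulrnAr -fps_derivXn coef_fpsX_deriv mulr_natr.
by rewrite XD; field; rewrite addrC natr1.
Qed.

Lemma Uinv_vanish : vanish_below Uinv 1.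
Proof. by case=> // _; rewrite coef0_Uinv. Qed.

Lemma Uinv_coefB n A B : Uinv_coef n (A - B) = Uinv_coef n A - Uinv_coef n B.
Proof. by rewrite /Uinv_coef mulrBl fps_coefB. Qed.

Lemma Uinv_coef_upto n A B : (forall i, (i <= n)%N -> A i = B i) ->
  Uinv_coef n A = Uinv_coef n B.
Proof. by move=> eqAB; apply: fps_coefM_upto. Qed.

Lemma Uinv_coef_UinvXn j n : Uinv_coef n (Uinv ^+ j) = (j == n)%:R.
Proof.
have [le_j_n|lt_n_j] := leqP j n; last first.
  have [vj _] := vanish_belowM (vanish_belowX j Uinv_vanish).1 (vanish_below0 (lagrange_kernel n)).
  by rewrite /Uinv_coef vj ?gtn_eqF // muln1 addn0.
rewrite /Uinv_coef; have -> : Uinv ^+ j * lagrange_kernel n = fpsX ^+ j * lagrange_kernel (n - j).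
  have PjV : Phi_root ^+ j / Phi_root ^+ j = 1 by rewrite mulrV ?unitrX ?Phi_root_unit.
  rewrite /lagrange_kernel /Uinv -{1}(subnK le_j_n) -addSn exprD exprMn exprVn.
  by rewrite -[RHS]mulr1 -PjV; ring.
rewrite -{2}(subnK le_j_n) coef_fpsXnM_addn.
have [nj0|n_j_gt0] := posnP (n - j).
  by rewrite nj0 coef0_lagrange_kernel eqn_leq le_j_n -subn_eq0 nj0.
rewrite coef_lagrange_kernel // subrr mul0r mulr0.
by rewrite eqn_leq le_j_n -subn_eq0 (gtn_eqF n_j_gt0).
Qed.

Lemma Uinv_coef_horner r p : Uinv_coef r (horner_fps p Uinv) = p`_r.
Proof.
have lt_r_N : (r < r.+1 + size p)%N by rewrite ltnS leq_addr.
rewrite /horner_fps (@horner_coef_wide _ (r.+1 + size p)); last first.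
  by rewrite (leq_trans (size_poly _ _)) // leq_addl.
rewrite /Uinv_coef mulr_suml fps_coef_sum (bigD1 (Ordinal lt_r_N)) //= big1 ?addr0.
  by rewrite coef_map -mulrA coef_fpsCM -/(Uinv_coef r _) Uinv_coef_UinvXn eqxx mulr1.
move=> i /eqP ne_i_r; rewrite coef_map -mulrA coef_fpsCM -/(Uinv_coef r _) Uinv_coef_UinvXn.
by case: eqP => [eq_i_r|]; rewrite ?mulr0 //; case: ne_i_r; apply: val_inj.
Qed.

Lemma Uinv_coef_comp B n : Uinv_coef n (fps_comp B Uinv) = B n.
Proof.
rewrite (@Uinv_coef_upto n _ (horner_fps (fps_trunc n B) Uinv)).
  by rewrite Uinv_coef_horner coef_fps_trunc leqnn.
by move=> i le_i_n; rewrite horner_fps_trunc ?coef0_Uinv.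
Qed.

(* [Uinv_coef] is triangular with unit diagonal: the lowest nonzero
   coefficient [E r] of [E] is [Uinv_coef r E]. *)
Lemma Uinv_coef_eq0 E : (forall n, Uinv_coef n E = 0) -> E = 0.
Proof.
move=> E0; apply/eqP; apply: contraT => /fps_neq0_lowest [r [Er0 Er]].
have [_] := vanish_belowM Er0 (vanish_below0 (lagrange_kernel r)).
by rewrite addn0 -/(Uinv_coef r E) E0 coef0_lagrange_kernel mulr1 => /esym/eqP; rewrite (negbTE Er).
Qed.

Lemma fps_comp_Uinv_coef A : fps_comp (Uinv_coef ^~ A) Uinv = A.
Proof.
apply/eqP; rewrite -subr_eq0; apply/eqP/Uinv_coef_eq0 => n.
by rewrite Uinv_coefB Uinv_coef_comp subrr.
Qed.

Definition U : fps := Uinv_coef ^~ fpsX.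

Lemma fps_comp_U : fps_comp U Uinv = fpsX.
Proof. exact: fps_comp_Uinv_coef. Qed.

Lemma fps_comp_Uinv_inj : injective (fps_comp ^~ Uinv).
Proof. by apply: fps_comp_inj; rewrite ?coef0_Uinv ?coef1_Uinv ?oner_eq0. Qed.

Lemma UXn m : U ^+ m = Uinv_coef ^~ (fpsX ^+ m).
Proof.
by apply: fps_comp_Uinv_inj; rewrite /= fps_compXn ?coef0_Uinv // fps_comp_U fps_comp_Uinv_coef.
Qed.

Lemma Uinv_coef_fpsXn m n : (0 < m)%N ->
  Uinv_coef n (fpsX ^+ m) = if (n < m)%N then 0 else (Phi_root ^+ n) (n - m)%N * (m%:R / n%:R).
Proof.
move=> m_gt0; rewrite /Uinv_coef coef_fpsXnM; case: ltnP => // le_m_n.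
rewrite coef_lagrange_kernel ?(leq_trans m_gt0) // natrB //; congr (_ * _).
by congr (_ / _); rewrite opprB addrC subrK.
Qed.

Lemma coef0_U : U 0%N = 0.
Proof. by rewrite /U -[fpsX]expr1 Uinv_coef_fpsXn. Qed.

Lemma coef1_U : U 1%N = 1.
Proof.
by rewrite /U -[fpsX]expr1 Uinv_coef_fpsXn //= expr1 subnn coef0_Phi_root divr1 mulr1.
Qed.

Lemma U_root_eqn : root_eqn h 1 U.
Proof.
apply: fps_comp_Uinv_inj; rewrite /= fps_compM ?coef0_Uinv // !fps_compXn ?coef0_Uinv //.
rewrite fps_compX ?coef0_Uinv // fps_comp_Phi_at ?coef0_Uinv // fps_comp_U -Phi_sum.
by rewrite muln1 -Phi_rootXh -exprMn /Uinv mulrVK ?unitrX ?Phi_root_unit.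
Qed.

End Lagrange.

(** * Roots of [u^h = s^(h d) Phi_h(u)] *)

Lemma coef0_fpsCXn c d : (0 < d)%N -> (fpsC c * fpsX ^+ d) 0%N = 0.
Proof. by move=> d_gt0; rewrite coef_fpsCM coef_fpsXn eq_sym gtn_eqF ?mulr0. Qed.

Lemma fps_subst_comp c d f : (0 < d)%N -> fps_subst c d f = fps_comp f (fpsC c * fpsX ^+ d).
Proof.
move=> d_gt0; apply: funext => n; rewrite coef_fps_comp ?coef0_fpsCXn // /fps_subst.
under eq_bigr do rewrite exprMn -rmorphXn coef_fpsCM -exprM coef_fpsXn.
have [/dvdnP[m ->]|ndvd_d_n] := boolP (d %| n)%N.
  have lt_m_md : (m < (m * d).+1)%N by rewrite ltnS leq_pmulr.
  rewrite mulnK // (bigD1 (Ordinal lt_m_md)) //= big1 ?addr0 => [|i /eqP ne_i_m].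
    by rewrite mulnC eqxx mulr1 mulrC.
  rewrite [(d * i)%N]mulnC eqn_pmul2r // (_ : (m == i) = false) ?mulr0 //.
  by apply/eqP => eq_m_i; case: ne_i_m; apply: val_inj.
rewrite big1 // => i _; rewrite (_ : n == d * i = false) ?mulr0 //.
by apply: contraNF ndvd_d_n => /eqP ->; apply: dvdn_mulr.
Qed.

Lemma fps_subst_vanish c d f : (0 < d)%N -> f 0%N = 0 -> vanish_below (fps_subst c d f) d.
Proof.
move=> d_gt0 f0 [|n] lt_n_d; first by rewrite /fps_subst dvdn0 div0n f0 mulr0.
rewrite /fps_subst (_ : (d %| n.+1)%N = false) //.
by apply: contraTF lt_n_d; rewrite -leqNgt; exact: dvdn_leq.
Qed.

Lemma coef_fps_subst c d f : (0 < d)%N -> fps_subst c d f d = c * f 1%N.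
Proof. by move=> d_gt0; rewrite /fps_subst dvdnn divnn d_gt0 expr1. Qed.

Section RootEquation.

Variable h : nat.
Hypothesis h_gt0 : (0 < h)%N.

Lemma root_eqn_subst d c : (0 < d)%N -> c ^+ h = 1 -> root_eqn h d (fps_subst c d (U h)).
Proof.
move=> d_gt0 ch; have q0 := coef0_fpsCXn c d_gt0.
rewrite fps_subst_comp // /root_eqn -fps_compXn // (U_root_eqn h_gt0) muln1.
rewrite fps_compM // fps_compXn // fps_compX // fps_comp_Phi_at //.
by rewrite exprMn -rmorphXn ch rmorph1 mul1r -exprM mulnC.
Qed.

(* Two roots with the same leading term [c s^d] coincide: [y1^h - y2^h] and
   [Phi_at h y1 - Phi_at h y2] are both divisible by [y1 - y2], and the
   cofactor [h c^(h-1) s^((h-1)d) + ...] of the first one dominates. *)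
Lemma root_eqn_uniq d c y1 y2 : (0 < d)%N -> c != 0 ->
  vanish_below y1 d -> vanish_below y2 d -> y1 d = c -> y2 d = c ->
  root_eqn h d y1 -> root_eqn h d y2 -> y1 = y2.
Proof.
move=> d_gt0 c_neq0 y1_0 y2_0 y1d y2d E1 E2.
set S1 := \sum_(i < h) y1 ^+ (h.-1 - i) * y2 ^+ i.
set S2 := \sum_(j <- Phi_idx h) \sum_(i < j) y1 ^+ (j.-1 - i) * y2 ^+ i.
have dPhi : Phi_at h y1 - Phi_at h y2 = (y1 - y2) * S2.
  by rewrite -sumrB mulr_sumr; apply: eq_bigr => j _; rewrite subrXX.
have : (y1 - y2) * (S1 - fpsX ^+ (h * d) * S2) = 0.
  by rewrite mulrBr -subrXX E1 E2 -mulrBr dPhi mulrCA subrr.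
move/eqP; rewrite mulf_eq0 subr_eq0 => /orP[/eqP //|/eqP/(congr1 (fun f : fps => f (h.-1 * d)%N))].
rewrite fps_coefB coef_fpsXnM ltn_pmul2r // ltn_predL h_gt0 subr0 fps_coef0 /S1 fps_coef_sum.
rewrite (eq_bigr (fun _ => c ^+ h.-1)) ?sumr_const ?card_ord => [/eqP|[i /= lt_i_h] _].
  by rewrite -mulr_natr mulf_eq0 expf_eq0 (negbTE c_neq0) andbF pnatr_eq0 gtn_eqF.
have le_i_h1 : (i <= h.-1)%N by rewrite -ltnS prednK.
have -> : (h.-1 * d = (h.-1 - i) * d + i * d)%N by rewrite -mulnDl subnK.
have [_ ->] := vanish_belowM (vanish_belowX (h.-1 - i) y1_0).1 (vanish_belowX i y2_0).1.
by rewrite (vanish_belowX _ y1_0).2 (vanish_belowX _ y2_0).2 y1d y2d -exprD subnK.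
Qed.

Lemma root_eqn_lead d c (y : fps) : (0 < d)%N -> c ^+ h = 1 ->
  vanish_below y d -> y d = c -> root_eqn h d y -> y = fps_subst c d (U h).
Proof.
move=> d_gt0 ch y0 yd Ey; have c_neq0 : c != 0.
  by apply: contra_eq_neq ch => ->; rewrite expr0n gtn_eqF // mulr0n eq_sym oner_eq0.
apply: (root_eqn_uniq d_gt0 c_neq0) => //; first exact: fps_subst_vanish (coef0_U h_gt0).
- by rewrite coef_fps_subst // coef1_U // mulr1.
- exact: root_eqn_subst.
Qed.

(* A root without constant term has leading term [c s^d] with [c^h = 1]. *)
Lemma root_eqn_small w d (y : fps) : h.-primitive_root w -> (0 < d)%N ->
  y 0%N = 0 -> root_eqn h d y -> exists2 i, (i < h)%N & y = fps_subst (w ^+ i) d (U h).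
Proof.
move=> w_prim d_gt0 y0 Ey.
have yhd : (y ^+ h) (h * d)%N = 1 by rewrite Ey -[(h * d)%N]add0n coef_fpsXnM_addn coef0_Phi_at.
have /fps_neq0_lowest [r [yr0 yr]] : y != 0.
  by apply: contra_eq_neq yhd => ->; rewrite expr0n gtn_eqF // mulr0n fps_coef0 eq_sym oner_eq0.
have [yhr0 yhr] := vanish_belowX h yr0.
have r_d : r = d.
  case: (ltngtP r d) => // [lt_r_d|lt_d_r].
    move: yhr; rewrite Ey coef_fpsXnM ltn_pmul2l // lt_r_d => /esym/eqP.
    by rewrite expf_eq0 (negbTE yr) andbF.
  by move: yhd; rewrite yhr0 ?ltn_pmul2l // => /eqP; rewrite eq_sym oner_eq0.
subst r; have ydh : y d ^+ h = 1 by rewrite -yhr.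
have [[i lt_i_h] /= wi] := prim_rootP w_prim ydh.
exists i => //; apply: root_eqn_lead => //.
by rewrite exprAC (prim_expr_order w_prim) expr1n.
Qed.

End RootEquation.

(** * Puiseux roots of [1 - z P(u) = 0] *)

Lemma laurent_rootE h N k g : laurent_root h N k g <->
  fpsX ^+ (h * k) * g ^+ h =
  fpsX ^+ N * \sum_(j <- Phi_idx h) fpsX ^+ ((2 * h - j) * k) * g ^+ j.
Proof.
rewrite /laurent_root fps_sumE big_map fps_powE !fps_XnE.
by under eq_bigr do rewrite fps_powE fps_XnE.
Qed.

Lemma laurent_root_shift h d k y :
  laurent_root h (h * d) k (fpsX ^+ k * y) <-> root_eqn h d y.
Proof.
rewrite laurent_rootE /root_eqn.
have -> : fpsX ^+ (h * k) * (fpsX ^+ k * y) ^+ h = fpsX ^+ (2 * h * k) * y ^+ h.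
  by rewrite exprMn mulrA -exprM -exprD; congr (fpsX ^+ _ * _); lia.
have -> : \sum_(j <- Phi_idx h) fpsX ^+ ((2 * h - j) * k) * (fpsX ^+ k * y) ^+ j =
    fpsX ^+ (2 * h * k) * Phi_at h y.
  rewrite /Phi_at mulr_sumr big_seq [RHS]big_seq; apply: eq_bigr => j.
  rewrite mem_Phi_idx => /andP[le_j_2h _].
  by rewrite exprMn mulrA -exprM -exprD; congr (fpsX ^+ _ * _); nia.
by rewrite mulrCA; split=> [/(mulfI (fpsXn_neq0 _))|->].
Qed.

Lemma big_Phi_idx_rev h (F : nat -> fps) :
  \sum_(j <- Phi_idx h) F (2 * h - j)%N = \sum_(j <- Phi_idx h) F j.
Proof.
rewrite !big_filter -[iota 0 _]/(index_iota 0 (2 * h).+1) [RHS]big_nat_rev.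
rewrite big_nat_cond [RHS]big_nat_cond.
apply: eq_big => [i|i _]; last by rewrite add0n subSS.
rewrite add0n subSS; case: (ltnP i (2 * h).+1) => //= lt_i_2h.
by apply/negb_inj/eqP/eqP; lia.
Qed.

(* [u = s^(-k) g] is a root iff [1/u = s^k y] is: [P(1/u) = P(u)]. *)
Lemma laurent_root_inv h d k g y : g * y = fpsX ^+ k ->
  laurent_root h (h * d) k g <-> root_eqn h d y.
Proof.
move=> gy; rewrite laurent_rootE /root_eqn.
have y_neq0 : y != 0 by apply: contra_eq_neq gy => ->; rewrite mulr0 eq_sym fpsXn_neq0.
have gh : fpsX ^+ (h * k) * g ^+ h * y ^+ (2 * h) = fpsX ^+ (2 * h * k) * y ^+ h.
  rewrite mul2n -addnn exprD.
  transitivity (fpsX ^+ (h * k) * (g * y) ^+ h * y ^+ h); first by rewrite exprMn; ring.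
  by rewrite gy -exprM -exprD; congr (fpsX ^+ _ * _); lia.
have gPhi : (\sum_(j <- Phi_idx h) fpsX ^+ ((2 * h - j) * k) * g ^+ j) * y ^+ (2 * h) =
    fpsX ^+ (2 * h * k) * Phi_at h y.
  rewrite mulr_suml /Phi_at -(big_Phi_idx_rev h (fun j => y ^+ j)) mulr_sumr.
  rewrite big_seq [RHS]big_seq; apply: eq_bigr => j; rewrite mem_Phi_idx => /andP[le_j_2h _].
  rewrite -[in y ^+ (2 * h)](subnK le_j_2h) exprD.
  transitivity (fpsX ^+ ((2 * h - j) * k) * (g * y) ^+ j * y ^+ (2 * h - j)).
    by rewrite exprMn; ring.
  by rewrite gy -exprM -exprD; congr (fpsX ^+ _ * _); nia.
split=> [E|E].
  by apply: (mulfI (fpsXn_neq0 (2 * h * k))); rewrite -gh E -mulrA gPhi mulrCA.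
by apply: (mulIf (expf_neq0 (2 * h) y_neq0)); rewrite gh -mulrA gPhi E mulrCA.
Qed.

Lemma laurent_large_inv k (g : fps) : laurent_large k g ->
  exists2 y : fps, y 0%N = 0 & g * y = fpsX ^+ k.
Proof.
case=> n lt_n_k gn; have /fps_neq0_lowest [r [gr0 gr]] : g != 0 by apply: contra_neq gn => ->.
have lt_r_k : (r < k)%N.
  by apply: leq_ltn_trans lt_n_k; rewrite leqNgt; apply: contra gn => /gr0 ->.
exists (fpsX ^+ (k - r) * (fps_shift g r)^-1); first by rewrite coef_fpsXnM subn_gt0 lt_r_k.
rewrite {1}(fps_shiftE gr0) mulrACA mulrV ?fps_unitE /fps_shift ?add0n // mulr1.
by rewrite -exprD subnKC // ltnW.
Qed.

Section PuiseuxRoots.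

Variables (h : nat) (w : algC).
Hypotheses (h_gt0 : (0 < h)%N) (w_prim : h.-primitive_root w).

Lemma laurent_root_U : laurent_root h h 0 (U h).
Proof.
by have := (laurent_root_shift h 1 0 (U h)).2 (U_root_eqn h_gt0); rewrite muln1 expr0 mul1r.
Qed.

Lemma laurent_root_lead_uniq d k g : (0 < d)%N -> laurent_root h (h * d) k g ->
  (forall n, (n < k + d)%N -> g n = 0) -> g (k + d)%N = 1 ->
  g = fps_mul (fps_Xn k) (fps_subst 1 d (U h)).
Proof.
move=> d_gt0 Eg g0 gkd; have gk0 : vanish_below g k by move=> n lt_n_k; apply/g0/ltn_addr.
move: Eg; rewrite (fps_shiftE gk0) laurent_root_shift fps_mulE fps_XnE => Ey; congr (_ * _).
apply: root_eqn_lead => //; first exact: expr1n.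
  by move=> n lt_n_d; rewrite /fps_shift g0 // addnC ltn_add2l.
by rewrite /fps_shift addnC.
Qed.

Lemma binom_starE (a : algC) k : binom_star h a k%:Z = fps_comp (binom_series a) (Phi h - 1) k.
Proof.
by rewrite coef_fps_comp ?coef0_Phi_sub1 //; apply: eq_bigr => j _; rewrite fps_powE.
Qed.

Lemma coef_UXn m n : (0 < m)%N -> fps_pow (U h) m n =
  if n == 0%N then 0 else (m%:R / n%:R) * binom_star h (n%:R / h%:R) (n%:Z - m%:Z).
Proof.
move=> m_gt0; rewrite fps_powE (UXn h_gt0) Uinv_coef_fpsXn //.
have [->|n_gt0] := posnP n; first by rewrite m_gt0.
case: ltnP => [lt_n_m|le_m_n].
  rewrite (_ : n%:Z - m%:Z = Negz (m - n).-1) ?mulr0 //.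
  by rewrite NegzE prednK ?subn_gt0 // -subzn ?opprB // ltnW.
by rewrite subzn // binom_starE -Phi_rootXn // mulrC.
Qed.

Lemma laurent_small_rootP d k g : (0 < d)%N ->
  (laurent_root h (h * d) k g /\ laurent_small k g) <->
  (exists2 i : nat, (i < h)%N & g = fps_mul (fps_Xn k) (fps_subst (w ^+ i) d (U h))).
Proof.
move=> d_gt0; split=> [[Eg g_small]|[i lt_i_h ->]].
  have gk0 : vanish_below g k by move=> n /ltnW /g_small.
  have g'0 : fps_shift g k 0%N = 0 by rewrite /fps_shift add0n g_small.
  move: Eg; rewrite (fps_shiftE gk0) laurent_root_shift => Ey.
  have [i lt_i_h ->] := root_eqn_small h_gt0 w_prim d_gt0 g'0 Ey.
  by exists i; rewrite // fps_mulE fps_XnE.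
rewrite fps_mulE fps_XnE; split.
  apply/laurent_root_shift; apply: root_eqn_subst => //.
  by rewrite exprAC (prim_expr_order w_prim) expr1n.
move=> n le_n_k; rewrite coef_fpsXnM; case: ltnP => // le_k_n.
by rewrite (_ : n - k = 0)%N ?fps_subst_vanish ?coef0_U //; apply/eqP; rewrite subn_eq0.
Qed.

Lemma laurent_large_rootP d k g : (0 < d)%N ->
  (laurent_root h (h * d) k g /\ laurent_large k g) <->
  (exists2 i : nat, (i < h)%N & fps_mul g (fps_subst (w ^+ i) d (U h)) = fps_Xn k).
Proof.
move=> d_gt0; split=> [[Eg /laurent_large_inv [y y0 gy]]|[i lt_i_h]].
  have [i lt_i_h yE] := root_eqn_small h_gt0 w_prim d_gt0 y0 ((laurent_root_inv _ _ gy).1 Eg).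
  by exists i; rewrite // -yE fps_mulE fps_XnE.
rewrite fps_mulE fps_XnE => gy; split.
  apply/(laurent_root_inv _ _ gy); apply: root_eqn_subst => //.
  by rewrite exprAC (prim_expr_order w_prim) expr1n.
have [//|not_large] := pselect (laurent_large k g).
have gk0 : vanish_below g k.
  by move=> n lt_n_k; apply/eqP/negbNE/negP => gn; apply: not_large; exists n.
move: gy; rewrite (fps_shiftE gk0) -mulrA -{2}(mulr1 (fpsX ^+ k)) => /(mulfI (fpsXn_neq0 k)).
move=> /(congr1 (fun f : fps => f 0%N)); rewrite fps_coefM big_ord1.
by rewrite fps_subst_vanish ?coef0_U // mulr0 => /eqP; rewrite eq_sym oner_eq0.
Qed.

End PuiseuxRoots.

Unset Implicit Arguments. Set Strict Implicit.

Theorem proposition4p10 (h : nat) (w : algC) :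
  (0 < h)%N -> h.-primitive_root w ->
  exists U : fps,
  (* U is a power series in z, beginning z + ..., root of 1 - z^h P(U) = 0 *)
      U 0%N = 0 /\ U 1%N = 1 /\ laurent_root h h 0 U /\
      (* uniqueness: every Puiseux root s^(-k) g (z = s^d) of 1 - z^h P(u) = 0
         beginning with z + ... equals U *)
      (forall (d k : nat) (g : fps), (0 < d)%N -> laurent_root h (h * d) k g ->
         (forall n, (n < k + d)%N -> g n = 0) -> g (k + d)%N = 1 ->
         g = fps_mul (fps_Xn k) (fps_subst 1 d U)) /\
      (* coefficient formula for U^m *)
      (forall m : nat, (0 < m)%N -> forall n : nat,
         fps_pow U m n =
         if n == 0%N then 0
         else (m%:R / n%:R) * binom_star h (n%:R / h%:R) (n%:Z - m%:Z)) /\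
      (* small roots of 1 - zP(u) = 0, in Puiseux series with z = s^(h d) *)
      (forall (d k : nat) (g : fps), (0 < d)%N ->
         (laurent_root h (h * d) k g /\ laurent_small k g) <->
         (exists2 i : nat, (i < h)%N &
            g = fps_mul (fps_Xn k) (fps_subst (w ^+ i) d U))) /\
      (* large roots *)
      (forall (d k : nat) (g : fps), (0 < d)%N ->
         (laurent_root h (h * d) k g /\ laurent_large k g) <->
         (exists2 i : nat, (i < h)%N &
            fps_mul g (fps_subst (w ^+ i) d U) = fps_Xn k)).
Proof.
move=> h_gt0 w_prim; exists (U h).
split; first exact: coef0_U.
split; first exact: coef1_U.
split; first exact: laurent_root_U.
split; first exact: laurent_root_lead_uniq.
split; first by move=> m m_gt0 n; apply: coef_UXn.
split; first exact: laurent_small_rootP.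
exact: laurent_large_rootP.
Qed.
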